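(* Let $k\in\mathbb{N}$ and $(A,B,C)\in\mathsf{TCP}_d^k$. Then $M_{k-1}(B)$ and $M_{k-1}(C)$ are positive semidefinite.
   Context: For $v\in\mathbb{C}^d$, $\sigma(v)$ is the number of nonzero coordinates; $\odot$ is the entrywise product and $\bar v$ the entrywise conjugate. A triple $(A,B,C)$ of $d\times d$ complex matrices with equal diagonals lies in $\mathsf{TCP}_d^k$ if there are finitely many vectors $v_n,w_n\in\mathbb{C}^d$ with $\sigma(v_n\odot w_n)\le k$ for all $n$ and $A=\sum_n|v_n\odot\bar v_n\rangle\langle w_n\odot\bar w_n|$, $B=\sum_n|v_n\odot w_n\rangle\langle v_n\odot w_n|$, $C=\sum_n|v_n\odot\bar w_n\rangle\langle v_n\odot\bar w_n|$. For $X\in\mathcal{M}_d(\mathbb{C})$ and $m\ge0$, $M_m(X)$ has entries $M_m(X)_{ii}=m|X_{ii}|$ and $M_m(X)_{ij}=-|X_{ij}|$ for $i\ne j$. *)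

From HB Require Import structures.
From mathcomp Require Import all_boot all_order all_algebra.
From mathcomp Require Import complex.
From mathcomp Require Import reals.
Set Implicit Arguments. Unset Strict Implicit. Unset Printing Implicit Defensive.
Import Order.TTheory GRing.Theory Num.Theory.
Local Open Scope ring_scope.

Section Defs.
Variable C : numClosedFieldType.
Variable d : nat.

Definition sigma (v : 'cV[C]_d) : nat := #|[set i | v i ord0 != 0]|.

Definition hprod (v w : 'cV[C]_d) : 'cV[C]_d := \col_i (v i ord0 * w i ord0).
Definition vconj (v : 'cV[C]_d) : 'cV[C]_d := map_mx Num.conj v.

Definition adj {m n} (M : 'M[C]_(m, n)) : 'M[C]_(n, m) := (map_mx Num.conj M)^T.
Definition ketbra (v w : 'cV[C]_d) : 'M[C]_d := v *m adj w.

Definition diag_eq (A B : 'M[C]_d) : Prop := forall i, A i i = B i i.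

Definition TCP (k : nat) (A B C' : 'M[C]_d) : Prop :=
  diag_eq A B /\ diag_eq B C' /\
  exists (N : nat) (v w : 'I_N -> 'cV[C]_d),
    (forall n, (sigma (hprod (v n) (w n)) <= k)%N) /\
    A = \sum_(n < N) ketbra (hprod (v n) (vconj (v n))) (hprod (w n) (vconj (w n))) /\
    B = \sum_(n < N) ketbra (hprod (v n) (w n)) (hprod (v n) (w n)) /\
    C' = \sum_(n < N) ketbra (hprod (v n) (vconj (w n))) (hprod (v n) (vconj (w n))).

Definition Mmat (m : C) (X : 'M[C]_d) : 'M[C]_d :=
  \matrix_(i, j) (if i == j then m * `|X i i| else - `|X i j|).

Definition psd (M : 'M[C]_d) : Prop :=
  adj M = M /\ forall x : 'cV[C]_d, 0 <= (adj x *m M *m x) ord0 ord0.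
End Defs.

From mathcomp Require Import all_boot all_order all_algebra.
From mathcomp Require Import complex reals.
Import Order.TTheory GRing.Theory Num.Theory.
Local Open Scope ring_scope.

(* Write B = sum_n u_n u_n^* where each u_n has at most k nonzero entries.  For
   a vector x, the triangle inequality bounds the off-diagonal part of
   x^* M_{k-1}(B) x by sum_n sum_{i <> j} a_{n,i} a_{n,j}, where
   a_{n,i} = |u_{n,i}| |x_i|.  As a_n has at most k nonzero entries,
   Cauchy-Schwarz gives (sum_i a_{n,i})^2 <= k sum_i a_{n,i}^2, i.e.
   sum_{i <> j} a_{n,i} a_{n,j} <= (k-1) sum_i a_{n,i}^2, and summing over n
   yields exactly the diagonal part (k-1) sum_i B_ii |x_i|^2.  The same applies
   to C, whose vectors v_n . conj w_n have the same support as v_n . w_n. *)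

Lemma sum_offdiag_mul {R : comPzRingType} {I : finType} (a : I -> R) :
  \sum_i \sum_(j | j != i) a i * a j = (\sum_i a i) ^+ 2 - \sum_i a i ^+ 2.
Proof.
rewrite expr2 mulr_suml -sumrB; apply: eq_bigr => i _.
rewrite [in RHS](bigD1 i) //= mulrDr mulr_sumr -expr2.
by rewrite addrAC subrr add0r.
Qed.

Lemma sqr_sum_le_card_support {R : numDomainType} {I : finType} (a : I -> R) :
  (forall i, a i \is Num.real) ->
  (\sum_i a i) ^+ 2 <= #|support a|%:R * \sum_i a i ^+ 2.
Proof.
move=> a_real; set S := support a.
have sumS (F : R -> R) : F 0 = 0 -> \sum_(i in S) F (a i) = \sum_i F (a i).
  move=> F0; rewrite big_mkcond; apply: eq_bigr => i _; rewrite inE.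
  by case: eqP => // ->.
rewrite -(sumS id) // -(sumS (fun x => x ^+ 2)) ?expr0n //.
set t := \sum_(i in S) _; set s := \sum_(i in S) _.
have sum_sqr_diff i :
    \sum_(j in S) (a i - a j) ^+ 2 = a i ^+ 2 *+ #|S| - (a i * t) *+ 2 + s.
  under eq_bigr => j _ do rewrite sqrrB.
  by rewrite big_split /= sumrB sumr_const sumrMnl -mulr_sumr.
have : 0 <= \sum_(i in S) \sum_(j in S) (a i - a j) ^+ 2.
  by do 2!apply: sumr_ge0 => ? _; rewrite -realEsqr realB.
rewrite (eq_bigr _ (fun i _ => sum_sqr_diff i)) big_split /= sumrB sumr_const.
rewrite !sumrMnl -mulr_suml -/s -/t -expr2 addrAC -mulr2n -mulrnBl.
by rewrite pmulrn_lge0 // subr_ge0 mulr_natl.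
Qed.

Lemma sum_offdiag_le_support {R : numDomainType} {I : finType} (a : I -> R) k :
  (forall i, a i \is Num.real) -> (#|support a| <= k)%N ->
  \sum_i \sum_(j | j != i) a i * a j <= (k%:R - 1) * \sum_i a i ^+ 2.
Proof.
move=> a_real supp_le; rewrite sum_offdiag_mul mulrBl mul1r lerB //.
apply: le_trans (sqr_sum_le_card_support a a_real) _.
rewrite ler_wpM2r ?ler_nat //.
by apply: sumr_ge0 => i _; rewrite -realEsqr.
Qed.

Section ComparisonMatrix.
Variables (C : numClosedFieldType) (d : nat).

Lemma ketbra_sum_entry N (u : 'I_N -> 'cV[C]_d) i j :
  (\sum_(n < N) ketbra (u n) (u n)) i j = \sum_(n < N) u n i ord0 * (u n j ord0)^*.
Proof. by rewrite summxE; apply: eq_bigr => n _; rewrite !mxE big_ord1 !mxE. Qed.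

Lemma adj_Mmat (m : C) (X : 'M[C]_d) :
  m \is Num.real -> (forall i j, X j i = (X i j)^*) -> adj (Mmat m X) = Mmat m X.
Proof.
move=> m_real X_herm; apply/matrixP => i j; rewrite !mxE.
case: eqVneq => [->|_]; rewrite conj_Creal ?realN ?realM ?normr_real //.
by rewrite X_herm norm_conjC.
Qed.

Lemma Mmat_quadratic_form (m : C) (X : 'M[C]_d) (x : 'cV[C]_d) :
  (adj x *m Mmat m X *m x) ord0 ord0 =
  m * \sum_i `|X i i| * `|x i ord0| ^+ 2
  - \sum_i \sum_(j | j != i) `|X i j| * ((x i ord0)^* * x j ord0).
Proof.
rewrite mxE; under eq_bigr do rewrite mxE mulr_suml.
rewrite exchange_big mulr_sumr -sumrB; apply: eq_bigr => i _.
rewrite (bigD1 i) //= !mxE eqxx -sumrN; congr (_ + _).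
  by rewrite normCK mulrAC mulrC -mulrA [x i ord0 * _]mulrC.
apply: eq_bigr => j ji; rewrite !mxE eq_sym (negbTE ji) mulrN mulNr mulrAC.
by rewrite mulrC.
Qed.

Lemma offdiag_form_le_norm (X : 'M[C]_d) (x : 'cV[C]_d) :
  (forall i j, X j i = (X i j)^*) ->
  \sum_i \sum_(j | j != i) `|X i j| * ((x i ord0)^* * x j ord0)
  <= \sum_i \sum_(j | j != i) `|X i j| * (`|x i ord0| * `|x j ord0|).
Proof.
move=> X_herm; set S := (s in s <= _).
have S_real : S \is Num.real.
  apply/CrealP; rewrite rmorph_sum; under eq_bigr do rewrite rmorph_sum.
  rewrite (exchange_big_dep xpredT) //=; apply: eq_bigr => i _.
  apply: eq_big => [j|j _]; first by rewrite eq_sym.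
  by rewrite !rmorphM /= conj_normC conjCK X_herm norm_conjC [x j ord0 * _]mulrC.
apply: le_trans (real_ler_norm S_real) _.
apply: le_trans (ler_norm_sum _ _ _) _; apply: ler_sum => i _.
apply: le_trans (ler_norm_sum _ _ _) _; apply: ler_sum => j _.
by rewrite !normrM norm_conjC normr_id.
Qed.

Section Gram.
Variables (N : nat) (u : 'I_N -> 'cV[C]_d).
Let X := \sum_(n < N) ketbra (u n) (u n).

Lemma gram_herm i j : X j i = (X i j)^*.
Proof.
rewrite !ketbra_sum_entry rmorph_sum; apply: eq_bigr => n _.
by rewrite rmorphM /= conjCK mulrC.
Qed.

Lemma norm_gram_le i j : `|X i j| <= \sum_(n < N) `|u n i ord0| * `|u n j ord0|.
Proof.
rewrite ketbra_sum_entry; apply: le_trans (ler_norm_sum _ _ _) _.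
by apply: ler_sum => n _; rewrite normrM norm_conjC.
Qed.

Lemma norm_gram_diag i : `|X i i| = \sum_(n < N) `|u n i ord0| ^+ 2.
Proof.
rewrite ketbra_sum_entry; under eq_bigr do rewrite -normCK.
by rewrite ger0_norm // sumr_ge0 // => n _; rewrite exprn_ge0.
Qed.

Lemma psd_Mmat_gram k :
  (forall n, (sigma (u n) <= k)%N) -> psd (Mmat (k%:R - 1) X).
Proof.
move=> supp_le; set m : C := k%:R - 1.
split; first by apply: adj_Mmat; [rewrite rpredB ?realn ?rpred1 | exact: gram_herm].
move=> x; rewrite Mmat_quadratic_form subr_ge0.
apply: le_trans (offdiag_form_le_norm _ x gram_herm) _.
pose a n i := `|u n i ord0| * `|x i ord0|.
have a_real n i : a n i \is Num.real by rewrite realM ?normr_real.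
have supp_a n : (#|support (a n)| <= k)%N.
  apply: leq_trans (supp_le n); apply/subset_leq_card/subsetP => i.
  by rewrite !inE; apply: contraTneq => u0; rewrite /a u0 normr0 mul0r eqxx.
have -> : m * \sum_i `|X i i| * `|x i ord0| ^+ 2 = \sum_n m * \sum_i a n i ^+ 2.
  rewrite -mulr_sumr exchange_big; congr (_ * _); apply: eq_bigr => i _.
  by rewrite norm_gram_diag mulr_suml; apply: eq_bigr => n _; rewrite exprMn.
have offdiag_le n := sum_offdiag_le_support (a n) k (a_real n) (supp_a n).
apply: le_trans (ler_sum _ (fun n _ => offdiag_le n)).
rewrite [s in _ <= s]exchange_big; apply: ler_sum => i _.
rewrite [s in _ <= s]exchange_big; apply: ler_sum => j _.
apply: le_trans (ler_wpM2r _ (norm_gram_le i j)) _; first by rewrite mulr_ge0.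
by rewrite mulr_suml; apply: ler_sum => n _; rewrite mulrACA.
Qed.

End Gram.

Lemma sigma_hprod_conj (v w : 'cV[C]_d) : sigma (hprod v (vconj w)) = sigma (hprod v w).
Proof. by apply: eq_card => i; rewrite !inE !mxE !mulf_eq0 conjC_eq0. Qed.

End ComparisonMatrix.

Theorem proposition3p12 (R : realType) (d k : nat) (A B C : 'M[R[i]]_d) :
  TCP k A B C ->
  psd (Mmat (k%:R - 1) B) /\ psd (Mmat (k%:R - 1) C).
Proof.
move=> [_ [_ [N [v [w [supp_le [_ [-> ->]]]]]]]]; split.
  exact: psd_Mmat_gram.
by apply: psd_Mmat_gram => n; rewrite sigma_hprod_conj.
Qed.
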